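(* For every convex set $\mathcal{H}\subseteq\Delta_n$ and every $\varepsilon>0$, there is a strategy for the player that wins the $(\mathcal{H},\varepsilon)$-cutting-with-margin game in $O(\log(n)/\varepsilon^2)$ rounds.
   Context: $\Delta_n=\{h\in\mathbb{R}^n:\sum_i h_i=1,\ h_i\ge0\}$ and $B_1(h,r)=\{v\in\mathbb{R}^n:\|v-h\|_1\le r\}$. The $(\mathcal{H},\varepsilon)$-cutting-with-margin game is played between a player and an adversary who both know $\mathcal{H}$ and $\varepsilon$: start with $\mathcal{H}_0=\mathcal{H}$, $k=0$. While $\mathcal{H}_k\ne\emptyset$: the player picks a point $h_k\in\mathcal{H}_k$ (possibly depending on the history); the adversary picks any convex set $\mathcal{H}_{k+1}\subseteq\mathcal{H}_k$ with $\mathcal{H}_{k+1}\cap B_1(h_k,\varepsilon)=\emptyset$; increment $k$. A player strategy wins in at most $r$ rounds if for every sequence $\mathcal{H}=\mathcal{H}_0\supseteq\mathcal{H}_1\supseteq\cdots\supseteq\mathcal{H}_t$ of legal adversary moves against it, $\mathcal{H}_t\ne\emptyset$ implies $t<r$. *)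

From HB Require Import structures.
From mathcomp Require Import all_boot all_order all_algebra.
From mathcomp Require Import all_classical all_reals all_analysis.
Set Implicit Arguments. Unset Strict Implicit. Unset Printing Implicit Defensive.
Import Order.TTheory GRing.Theory Num.Theory.
Local Open Scope classical_set_scope.
Local Open Scope ring_scope.

Definition vec (R : realType) (n : nat) := 'I_n -> R.

Definition simplex (R : realType) (n : nat) : set (vec R n) :=
  [set h | (forall i, 0 <= h i) /\ \sum_(i < n) h i = 1].

Definition ball1 (R : realType) (n : nat) (h : vec R n) (r : R) : set (vec R n) :=
  [set v | \sum_(i < n) `|v i - h i| <= r].

Definition cvx_set (R : realType) (n : nat) (S : set (vec R n)) : Prop :=
  forall x y (t : R), S x -> S y -> 0 <= t -> t <= 1 ->
    S (fun i => t * x i + (1 - t) * y i).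

(* A player strategy maps the history [:: H_0; ...; H_k] of sets to the
   point h_k. *)
Definition strategy (R : realType) (n : nat) := seq (set (vec R n)) -> vec R n.

Definition history (R : realType) (n : nat) (Hs : nat -> set (vec R n)) (k : nat)
  : seq (set (vec R n)) := mkseq Hs k.+1.

Definition legal_play (R : realType) (n : nat) (H : set (vec R n)) (eps : R)
  (sigma : strategy R n) (Hs : nat -> set (vec R n)) (t : nat) : Prop :=
  Hs 0%N = H /\
  forall k, (k < t)%N ->
    [/\ cvx_set (Hs k.+1), Hs k.+1 `<=` Hs k &
        Hs k.+1 `&` ball1 (sigma (history Hs k)) eps = set0].

Definition valid_strategy (R : realType) (n : nat) (H : set (vec R n)) (eps : R)
  (sigma : strategy R n) : Prop :=
  forall Hs t, legal_play H eps sigma Hs t -> Hs t !=set0 ->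
    Hs t (sigma (history Hs t)).

Definition wins_within (R : realType) (n : nat) (H : set (vec R n)) (eps : R)
  (sigma : strategy R n) (r : nat) : Prop :=
  valid_strategy H eps sigma /\
  forall Hs t, legal_play H eps sigma Hs t -> Hs t !=set0 -> (t < r)%N.

From HB Require Import structures.
From mathcomp Require Import all_boot all_order all_algebra.
From mathcomp Require Import all_classical all_reals all_analysis.
From mathcomp Require Import ring lra.
Set Implicit Arguments. Unset Strict Implicit. Unset Printing Implicit Defensive.
Import Order.TTheory GRing.Theory Num.Theory.
Local Open Scope classical_set_scope.
Local Open Scope ring_scope.

(* The player plays a point h_k of H_k whose negative entropy
   f(x) = sum_i x_i ln x_i is within eps^2/32 of its infimum over H_k.  On the
   simplex f is strongly convex for the l1 norm, in the midpoint form
   f(x) + f(y) - 2 f((x+y)/2) >= mu |x - y|_1 - 2 mu^2 for every mu.  A point z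
   that survives the cut is eps-far from h_k while (z + h_k)/2 is still in H_k,
   so taking mu = eps/4 gives f(z) >= inf_{H_k} f + 3 eps^2/32: the infimum of f
   rises by 3 eps^2/32 per round.  Since -ln n <= f <= 0 on the simplex, the
   game ends within 32 ln n / (3 eps^2) + 1 rounds. *)

Section EntropyInequalities.
Variable R : realType.

Lemma sub_le_mul_lnB (p q : R) : 0 <= p -> 0 < q -> p - q <= p * (ln p - ln q).
Proof.
move=> p_ge0 q_gt0; have [->|p_neq0] := eqVneq p 0.
  by rewrite mul0r sub0r oppr_le0 ltW.
have p_gt0 : 0 < p by rewrite lt0r p_neq0.
have := expR_ge1Dx (ln q - ln p); rewrite expRB !lnK ?posrE // ler_pdivlMr //.
nra.
Qed.

Lemma mul_sub_le_sqr_lnB (u w : R) : 0 <= u -> 0 < w ->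
  2 * u * (u - w) <= u ^+ 2 * (ln (u ^+ 2) - ln (w ^+ 2)).
Proof.
move=> u_ge0 w_gt0; have [->|u_neq0] := eqVneq u 0.
  by rewrite expr0n mulr0 !mul0r.
have u_gt0 : 0 < u by rewrite lt0r u_neq0.
have -> : ln (u ^+ 2) - ln (w ^+ 2) = 2 * (ln u - ln w).
  by rewrite !lnXn // !mulr2n; ring.
have := sub_le_mul_lnB (ltW u_gt0) w_gt0; nra.
Qed.

(* With u = sqrt a, v = sqrt b, w = sqrt ((a+b)/2), the right-hand side is at
   least 2u(u - w) + 2v(v - w) = (u - v)^2/2 + (2w - u - v)^2/2, and
   mu |a - b| = mu |u - v| (u + v) <= (u - v)^2/2 + mu^2 (u + v)^2/2. *)
Lemma xlnx_midpoint_gap (a b mu : R) : 0 <= a -> 0 <= b ->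
  mu * `|a - b| - mu ^+ 2 * (a + b) <=
  a * ln a + b * ln b - 2 * ((a + b) / 2 * ln ((a + b) / 2)).
Proof.
move=> a_ge0 b_ge0; set m := (a + b) / 2.
have [ab0|ab_neq0] := eqVneq (a + b) 0.
  have [a0 b0] : a = 0 /\ b = 0 by lra.
  by rewrite /m ab0 a0 b0 !(subrr, normr0, mul0r, mulr0).
have m_gt0 : 0 < m by rewrite /m; lra.
set u := Num.sqrt a; set v := Num.sqrt b; set w := Num.sqrt m.
have u_ge0 : 0 <= u := sqrtr_ge0 a.
have v_ge0 : 0 <= v := sqrtr_ge0 b.
have w_gt0 : 0 < w by rewrite sqrtr_gt0.
have hu := mul_sub_le_sqr_lnB u_ge0 w_gt0.
have hv := mul_sub_le_sqr_lnB v_ge0 w_gt0.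
have ew : 2 * w ^+ 2 = u ^+ 2 + v ^+ 2.
  by rewrite !sqr_sqrtr // ?(ltW m_gt0) /m; field.
rewrite -[a](sqr_sqrtr a_ge0) -[b](sqr_sqrtr b_ge0) -[m](sqr_sqrtr (ltW m_gt0)).
rewrite -/u -/v -/w in hu hv *.
have -> : `|u ^+ 2 - v ^+ 2| = `|u - v| * (u + v).
  by rewrite -[u + v](ger0_norm (addr_ge0 u_ge0 v_ge0)) -normrM; congr `|_|; ring.
set d := `|u - v|.
have dd : d ^+ 2 = (u - v) ^+ 2 by rewrite /d real_normK // num_real.
have hd : d ^+ 2 / 2 <= 2 * u * (u - w) + 2 * v * (v - w).
  have : 0 <= (2 * w - (u + v)) ^+ 2 := sqr_ge0 _.
  nra.
have -> : 2 * (w ^+ 2 * ln (w ^+ 2)) = (u ^+ 2 + v ^+ 2) * ln (w ^+ 2).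
  by rewrite -ew mulrA.
suff : mu * (d * (u + v)) - mu ^+ 2 * (u ^+ 2 + v ^+ 2) <= d ^+ 2 / 2 by lra.
have : 0 <= (d - mu * (u + v)) ^+ 2 := sqr_ge0 _.
have : 0 <= mu ^+ 2 * (u - v) ^+ 2 by apply: mulr_ge0; apply: sqr_ge0.
nra.
Qed.

End EntropyInequalities.

Section Negentropy.
Variables (R : realType) (n : nat).
Implicit Types x y : vec R n.

Definition midpoint x y : vec R n := fun i => (x i + y i) / 2.

Lemma cvx_set_midpoint (S : set (vec R n)) x y :
  cvx_set S -> S x -> S y -> S (midpoint x y).
Proof.
move=> cvxS Sx Sy.
have -> : midpoint x y = fun i => 2^-1 * x i + (1 - 2^-1) * y i.
  by apply/funext => i; rewrite /midpoint; field.
by apply: cvxS => //; lra.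
Qed.

Definition negent x : R := \sum_(i < n) x i * ln (x i).

Lemma negent_midpoint_gap x y (mu : R) : simplex x -> simplex y ->
  mu * \sum_(i < n) `|x i - y i| - 2 * mu ^+ 2 <=
  negent x + negent y - 2 * negent (midpoint x y).
Proof.
move=> [x_ge0 sum_x] [y_ge0 sum_y].
have -> : 2 * mu ^+ 2 = mu ^+ 2 * (\sum_(i < n) x i + \sum_(i < n) y i).
  by rewrite sum_x sum_y; ring.
rewrite /negent -big_split /= !mulr_sumr -sumrB -big_split /= -sumrB.
by apply: ler_sum => i _; exact: xlnx_midpoint_gap.
Qed.

Lemma simplex_dim_gt0 x : simplex x -> (0 < n)%N.
Proof.
case: n x => [|m] x [_ sum_x] //.
by move: sum_x; rewrite big_ord0 => /eqP; rewrite eq_sym oner_eq0.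
Qed.

Lemma opp_ln_le_negent x : simplex x -> - ln n%:R <= negent x.
Proof.
move=> sx; have n_gt0 : 0 < n%:R :> R by rewrite ltr0n (simplex_dim_gt0 sx).
case: sx => x_ge0 sum_x.
have : \sum_(i < n) (x i - n%:R^-1) <= \sum_(i < n) x i * (ln (x i) - ln n%:R^-1).
  by apply: ler_sum => i _; apply: sub_le_mul_lnB; rewrite ?invr_gt0.
rewrite sumrB sum_x sumr_const card_ord -[_ *+ n]mulr_natr mulVf ?lt0r_neq0 // subrr.
under eq_bigr do rewrite lnV ?posrE // opprK mulrDr.
by rewrite big_split /= -mulr_suml sum_x mul1r /negent; lra.
Qed.

Lemma negent_le0 x : simplex x -> negent x <= 0.
Proof.
move=> [x_ge0 sum_x]; apply: sumr_le0 => i _.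
apply: mulr_ge0_le0 => //; apply: ln_le0.
by rewrite -sum_x (bigD1 i) //= lerDl sumr_ge0.
Qed.

End Negentropy.

Section EntropyStrategy.
Variables (R : realType) (n : nat).
Implicit Types (S : set (vec R n)) (h z : vec R n) (delta eps : R).

(* H_k need not be closed, so the infimum of negent need not be attained. *)
Definition approx_argmin delta S h : Prop :=
  S h /\ forall z, S z -> negent h <= negent z + delta.

Lemma exists_approx_argmin delta S : 0 < delta -> S !=set0 -> S `<=` @simplex R n ->
  exists h, approx_argmin delta S h.
Proof.
move=> delta_gt0 [z Sz] S_simplex.
have negent_inf : has_inf [set negent x | x in S].
  split; first by exists (negent z), z.
  by exists (- ln n%:R) => _ [x Sx <-]; exact/opp_ln_le_negent/S_simplex.
have [_ [h Sh <-] h_lt] := inf_adherent delta_gt0 negent_inf.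
exists h; split => // y Sy.
have : inf [set negent x | x in S] <= negent y.
  by apply: (ge_inf negent_inf.2); exists y.
lra.
Qed.

Lemma approx_argmin_cut delta eps S h z (c : R) :
  cvx_set S -> S `<=` @simplex R n -> approx_argmin delta S h ->
  (forall y, S y -> c <= negent y) -> S z ->
  0 <= eps -> eps < \sum_(i < n) `|z i - h i| ->
  c + (eps ^+ 2 / 8 - delta) <= negent z.
Proof.
move=> cvxS S_simplex [Sh h_min] c_le Sz eps_ge0 far.
have Sm : S (midpoint z h) by exact: cvx_set_midpoint.
have gap := negent_midpoint_gap (eps / 4) (S_simplex _ Sz) (S_simplex _ Sh).
have far4 : eps / 4 * eps <= eps / 4 * \sum_(i < n) `|z i - h i|.
  by apply: ler_wpM2l; lra.
have := h_min _ Sm; have := c_le _ Sm.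
have : (eps / 4) ^+ 2 = eps ^+ 2 / 16 by field.
have : eps / 4 * eps = eps ^+ 2 / 4 by rewrite expr2; field.
lra.
Qed.

Definition entropy_strategy delta : strategy R n :=
  fun s => xget (fun _ => 0) (approx_argmin delta (last set0 s)).

Lemma entropy_strategy_approx_argmin delta (Hs : nat -> set (vec R n)) k :
  0 < delta -> Hs k !=set0 -> Hs k `<=` @simplex R n ->
  approx_argmin delta (Hs k) (entropy_strategy delta (history Hs k)).
Proof.
move=> delta_gt0 Hk_neq0 Hk_simplex.
rewrite /entropy_strategy /history mkseqS last_rcons.
by apply: xgetPex; apply: exists_approx_argmin.
Qed.

End EntropyStrategy.

Section LegalPlay.
Variables (R : realType) (n : nat) (H : set (vec R n)) (eps : R).
Variables (sigma : strategy R n) (Hs : nat -> set (vec R n)) (t : nat).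
Hypothesis play : legal_play H eps sigma Hs t.

Lemma legal_play_subset k : (k <= t)%N -> Hs k `<=` H.
Proof.
case: play => H0 moves; elim: k => [|k IHk] k_le; first by rewrite H0.
by have [_ sub _] := moves k k_le; apply: subset_trans sub (IHk (ltnW k_le)).
Qed.

Lemma legal_play_cvx k : cvx_set H -> (k <= t)%N -> cvx_set (Hs k).
Proof.
case: play => H0 moves cvxH; case: k => [|k] k_le; first by rewrite H0.
by have [] := moves k k_le.
Qed.

Lemma legal_play_far k z : (k < t)%N -> Hs k.+1 z ->
  eps < \sum_(i < n) `|z i - sigma (history Hs k) i|.
Proof.
case: play => _ moves k_lt Hz; have [_ _ disj] := moves k k_lt.
rewrite ltNge; apply/negP => near.
by have : (Hs k.+1 `&` ball1 (sigma (history Hs k)) eps) z by []; rewrite disj.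
Qed.

End LegalPlay.

Section EntropyGame.
Variables (R : realType) (n : nat) (H : set (vec R n)) (eps delta : R).
Hypotheses (H_simplex : H `<=` @simplex R n) (delta_gt0 : 0 < delta).

Lemma entropy_strategy_valid : valid_strategy H eps (entropy_strategy delta).
Proof.
move=> Hs t play Ht_neq0.
have Ht_simplex := subset_trans (legal_play_subset play (leqnn t)) H_simplex.
by have [] := entropy_strategy_approx_argmin delta_gt0 Ht_neq0 Ht_simplex.
Qed.

Lemma entropy_strategy_progress Hs t k z :
  cvx_set H -> 0 <= eps -> legal_play H eps (entropy_strategy delta) Hs t ->
  (k <= t)%N -> Hs k z -> - ln n%:R + k%:R * (eps ^+ 2 / 8 - delta) <= negent z.
Proof.
move=> cvxH eps_ge0 play; elim: k z => [|k IHk] z k_le Hz.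
  rewrite mul0r addr0; apply: opp_ln_le_negent; apply: H_simplex.
  by case: play => <-.
have Hk_simplex := subset_trans (legal_play_subset play (ltnW k_le)) H_simplex.
have [_ sub _] := play.2 k k_le.
have argmin :=
  entropy_strategy_approx_argmin delta_gt0 (ex_intro _ z (sub _ Hz)) Hk_simplex.
have := approx_argmin_cut (legal_play_cvx play cvxH (ltnW k_le)) Hk_simplex argmin
  (IHk^~ (ltnW k_le)) (sub _ Hz) eps_ge0 (legal_play_far play k_le Hz).
by rewrite -[k.+1%:R]natr1; lra.
Qed.

Lemma entropy_strategy_rounds Hs t :
  cvx_set H -> 0 <= eps -> legal_play H eps (entropy_strategy delta) Hs t ->
  Hs t !=set0 -> t%:R * (eps ^+ 2 / 8 - delta) <= ln n%:R.
Proof.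
move=> cvxH eps_ge0 play [z Hz].
have := entropy_strategy_progress cvxH eps_ge0 play (leqnn t) Hz.
have := negent_le0 (H_simplex (legal_play_subset play (leqnn t) Hz)).
lra.
Qed.

End EntropyGame.

Theorem theorem2 :
  exists C : nat, forall (R : realType) (n : nat) (H : set (vec R n)) (eps : R),
    cvx_set H -> H `<=` @simplex R n -> 0 < eps ->
    exists (sigma : strategy R n) (r : nat),
      wins_within H eps sigma r /\
      (r%:R <= C%:R * (1 + ln (n%:R) / eps ^+ 2) :> R).
Proof.
exists 12%N => R n H eps cvxH H_simplex eps_gt0.
have eps2_gt0 : 0 < eps ^+ 2 by rewrite exprn_gt0.
have delta_gt0 : 0 < eps ^+ 2 / 32 by rewrite divr_gt0.
have ln_n_ge0 : 0 <= ln n%:R :> R.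
  by have [->|n_gt0] := posnP n; [rewrite ln0 | apply: ln_ge0; rewrite ler1n].
set rounds : R := ln n%:R / (eps ^+ 2 / 8 - eps ^+ 2 / 32).
have rounds_ge0 : 0 <= rounds by rewrite divr_ge0 //; lra.
exists (entropy_strategy (eps ^+ 2 / 32)), (Num.truncn rounds).+1; split.
  split; first exact: entropy_strategy_valid.
  move=> Hs t play Ht_neq0; rewrite ltnS truncn_ge_nat // ler_pdivlMr; last by lra.
  exact: entropy_strategy_rounds (ltW eps_gt0) play Ht_neq0.
have := truncn_le rounds; rewrite rounds_ge0 -natr1.
have -> : rounds = 32 / 3 * (ln n%:R / eps ^+ 2) by rewrite /rounds; field; lra.
have : 0 <= ln n%:R / eps ^+ 2 by rewrite divr_ge0 // ltW.
lra.
Qed.
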